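(* Let $r_{\min}\in(0,1)$, $n\ge1$, $\gamma\ge1$ a perfect-square integer, and $\ell\ge0$ an integer with $\gamma^{\ell+1}\le n$. Put $a_\ell=n/\gamma^\ell$, $a_{\ell+1}=a_\ell/\gamma$, $n_\ell=n/(2^\ell\gamma^\ell)$, $n_{\ell+1}=n_\ell/(2\gamma)$, $K_1=\frac{4(1+r_{\min})^2}{\pi r_{\min}^2}$, $K_2=\frac1{2K_1}$, $M=K_22^{-\ell}\gamma$ (all assumed integers, $M$ even), and assume $M\ge100$. Let $V\subset[0,\sqrt{a_\ell}]^2$ with $|V|=n_\ell$ and minimum separation $r_{\min}$, partition $[0,\sqrt{a_\ell}]^2$ into $\gamma$ squarelets of side $\sqrt{a_{\ell+1}}$, and let $\mathcal D$ be a set of $M$ dense squarelets (squarelets containing at least $n_{\ell+1}$ points of $V$). Let $\lambda$ be any set of $n_\ell$ source–destination pairs on $V$ in which every node is a source exactly once and a destination exactly once. Then for each pair $p=(u,w)$ there is a set $R_p\subset\mathcal D$ of exactly $M/2$ squarelets $k$ with $r_{u,k}\ge\sqrt{2a_{\ell+1}}$ and $r_{w,k}\ge\sqrt{2a_{\ell+1}}$, and the set of incidences $\{(p,k):p\in\lambda,\ k\in R_p\}$ can be partitioned into at most $K_22^{-\ell}\gamma^2$ classes such that in each class every pair $p$ occurs at most once and every squarelet $k$ occurs in at most $n_{\ell+1}$ incidences. (Consequently each pair occurs in exactly $K_22^{-\ell-1}\gamma$ classes, with distinct squarelets.)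
   Context: For a point $u$ and a squarelet $A$, $r_{u,A}=\min_{v\in A}\lVert u-v\rVert$ denotes the Euclidean distance from $u$ to the closest point of $A$. *)

From Stdlib Require Import Reals Lra List.
Import ListNotations.
Open Scope R_scope.

Definition pt : Type := (R * R)%type.

Definition edist (u v : pt) : R :=
  sqrt ((fst u - fst v) ^ 2 + (snd u - snd v) ^ 2).

Definition is_nat (x : R) : Prop := exists k : nat, x = INR k.

(* Squarelets are indexed by (i,j) with i,j < s where gamma = s*s;
   squarelet (i,j) has side h and lower-left corner (i*h, j*h). *)
Definition squarelet : Type := (nat * nat)%type.

Definition in_closed_sq (h : R) (k : squarelet) (v : pt) : Prop :=
  INR (fst k) * h <= fst v <= INR (S (fst k)) * h /\
  INR (snd k) * h <= snd v <= INR (S (snd k)) * h.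

(* r_{u,A} >= c, where r_{u,A} = min_{v in A} ||u - v|| (A closed squarelet). *)
Definition r_ge (h : R) (u : pt) (k : squarelet) (c : R) : Prop :=
  forall v : pt, in_closed_sq h k v -> c <= edist u v.

(* Membership of a point in a cell of the partition of [0, s h]^2 into s*s
   squarelets: half-open cells, with the last row/column closed. *)
Definition coord_in (s : nat) (h : R) (i : nat) (x : R) : Prop :=
  INR i * h <= x /\ (x < INR (S i) * h \/ (S i = s /\ x <= INR s * h)).

Definition in_cell (s : nat) (h : R) (k : squarelet) (v : pt) : Prop :=
  coord_in s h (fst k) (fst v) /\ coord_in s h (snd k) (snd v).

Definition dense (s : nat) (h : R) (V : list pt) (m : R) (k : squarelet) : Prop :=
  exists W : list pt, NoDup W /\ incl W V /\ Forall (in_cell s h k) W /\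
                      m <= INR (length W).

From Stdlib Require Import Reals Lra List Permutation Lia ClassicalEpsilon FinFun.
Import ListNotations.
Open Scope R_scope.

(* Write h = sqrt a_{l+1} for the side of a squarelet and
   c = sqrt (2 a_{l+1}).
   1. Geometry: since c <= 3h/2, a squarelet at distance < c from a point u
      has both indices in a window of 4 consecutive integers determined by u,
      so at most 16 squarelets are close to u and at most 32 are close to an
      endpoint of a pair p.  Hence, as |D| = M >= 100 gives M - 32 >= M/2, the
      first M/2 squarelets of D far from both endpoints of p form a valid R_p.
   2. Combinatorics: cut the n_l pairs of lambda (listed in some order) into
      2 gamma consecutive blocks of n_{l+1} pairs and give the incidence (p,k)
      the class (block of p) * M/2 + (position of k in R_p).  A pair meets each
      class at most once, a class only contains pairs of one block (hence at
      most n_{l+1} incidences), and there are 2 gamma * M/2 = gamma M =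
      K2 2^{-l} gamma^2 classes. *)

(* Position of the first occurrence of x in l (length l if absent). *)
Fixpoint index_of {A} (dec : forall x y : A, {x = y} + {x <> y}) (x : A)
    (l : list A) : nat :=
  match l with
  | [] => 0%nat
  | y :: t => if dec x y then 0%nat else S (index_of dec x t)
  end.

Lemma index_of_lt {A} dec (x : A) l : In x l -> (index_of dec x l < length l)%nat.
Proof.
  induction l as [|y t IH]; simpl; [tauto|]. intros [E|Hx].
  - subst y. destruct (dec x x); [lia|congruence].
  - destruct (dec x y); [lia|]. specialize (IH Hx). lia.
Qed.

Lemma index_of_inj {A} dec (x y : A) l :
  In x l -> In y l -> index_of dec x l = index_of dec y l -> x = y.
Proof.
  induction l as [|z t IH]; simpl; [tauto|]. intros Hx Hy.
  destruct (dec x z) as [->|nx]; destruct (dec y z) as [->|ny];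
    try congruence; try lia.
  intro E. injection E. apply IH.
  - destruct Hx; [congruence|assumption].
  - destruct Hy; [congruence|assumption].
Qed.

Definition pair_dec : forall x y : pt * pt, {x = y} + {x <> y}.
Proof. repeat decide equality; apply Req_EM_T. Defined.

Definition squarelet_dec : forall x y : squarelet, {x = y} + {x <> y}.
Proof. decide equality; apply Nat.eq_dec. Defined.

(* A coordinate y of a cell [i h, (i+1) h] within distance c <= 3h/2 of x
   forces i into a window of 4 consecutive integers depending only on x. *)
Definition window (h x : R) : list nat := seq (Z.to_nat (up (x / h - 5/2))) 4.

Lemma window_spec (h c x y : R) (i : nat) :
  0 < h -> c <= 3/2 * h ->
  INR i * h <= y <= INR (S i) * h -> Rabs (x - y) < c -> In i (window h x).
Proof.
  intros Hh Hc [Hy1 Hy2] Hd. rewrite S_INR in Hy2.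
  assert (Hxy : x - y < 3/2 * h /\ y - x < 3/2 * h).
  { split; [|rewrite Rabs_minus_sym in Hd];
      (eapply Rle_lt_trans; [apply Rle_abs|lra]). }
  set (t := x / h) in *.
  replace x with (t * h) in Hxy by (unfold t; field; lra).
  assert (Hi : t - 5/2 < INR i < t + 3/2) by (split; nra).
  destruct (archimed (t - 5/2)) as [Hup1 Hup2].
  rewrite INR_IZR_INZ in Hi.
  assert (Hlo : (up (t - 5/2) - 1 < Z.of_nat i)%Z).
  { apply lt_IZR. rewrite minus_IZR. simpl. lra. }
  assert (Hhi : (Z.of_nat i < up (t - 5/2) + 4)%Z).
  { apply lt_IZR. rewrite plus_IZR. simpl. lra. }
  unfold window; fold t. apply in_seq. lia.
Qed.

Lemma Rabs_coord_le_edist (u v : pt) :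
  Rabs (fst u - fst v) <= edist u v /\ Rabs (snd u - snd v) <= edist u v.
Proof.
  pose proof (Rle_0_sqr (fst u - fst v)). pose proof (Rle_0_sqr (snd u - snd v)).
  unfold edist, Rsqr in *.
  split; rewrite <- sqrt_Rsqr_abs; apply sqrt_le_1_alt; unfold Rsqr; simpl; nra.
Qed.

(* The 16 squarelets that may lie within distance c <= 3h/2 of u. *)
Definition near_squarelets (h : R) (u : pt) : list squarelet :=
  list_prod (window h (fst u)) (window h (snd u)).

Lemma near_squarelets_length (h : R) (u : pt) :
  length (near_squarelets h u) = 16%nat.
Proof.
  unfold near_squarelets, window, squarelet.
  rewrite length_prod, !length_seq. reflexivity.
Qed.

Lemma near_squarelets_spec (h c : R) (u : pt) (k : squarelet) :
  0 < h -> c <= 3/2 * h -> ~ r_ge h u k c -> In k (near_squarelets h u).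
Proof.
  intros Hh Hc Hnear.
  apply not_all_ex_not in Hnear as [v Hv].
  apply Classical_Prop.imply_to_and in Hv as [[Hx Hy] Hd].
  apply Rnot_le_lt in Hd.
  destruct (Rabs_coord_le_edist u v) as [Hdx Hdy].
  destruct k as [i j]. apply in_prod; eapply window_spec; eauto; lra.
Qed.

Lemma sqrt_double_le (a : R) : 0 < a -> sqrt (2 * a) <= 3/2 * sqrt a.
Proof.
  intro Ha.
  assert (Hs : 0 < sqrt a) by (apply sqrt_lt_R0; lra).
  pose proof (sqrt_sqrt a ltac:(lra)). pose proof (sqrt_sqrt (2 * a) ltac:(lra)).
  pose proof (sqrt_pos (2 * a)). nra.
Qed.

Lemma filter_length_lower {A} (f : A -> bool) (D B : list A) :
  NoDup D -> (forall x, In x D -> f x = false -> In x B) ->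
  (length D <= length (filter f D) + length B)%nat.
Proof.
  intros HD Hrej.
  assert (Hneg : (length (filter (fun x => negb (f x)) D) <= length B)%nat).
  { apply NoDup_incl_length; [apply NoDup_filter; exact HD|].
    intros x Hx. apply filter_In in Hx as [HxD Hfx].
    apply Hrej; [exact HxD|]. destruct (f x); [discriminate|reflexivity]. }
  pose proof (filter_length f D). lia.
Qed.

Definition far (h c : R) (p : pt * pt) (k : squarelet) : Prop :=
  r_ge h (fst p) k c /\ r_ge h (snd p) k c.

Definition farb (h c : R) (p : pt * pt) (k : squarelet) : bool :=
  if excluded_middle_informative (far h c p k) then true else false.

Lemma farb_spec (h c : R) (p : pt * pt) (k : squarelet) :
  farb h c p k = true <-> far h c p k.
Proof.
  unfold farb. destruct (excluded_middle_informative (far h c p k)); split;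
    congruence || tauto.
Qed.

Definition far_choice (h c : R) (H : nat) (D : list squarelet) (p : pt * pt)
    : list squarelet :=
  firstn H (filter (farb h c p) D).

Lemma incl_firstn {A} (n : nat) (l : list A) : incl (firstn n l) l.
Proof. intros x Hx. rewrite <- (firstn_skipn n l). apply in_or_app. left. exact Hx. Qed.

Lemma NoDup_firstn {A} (n : nat) (l : list A) : NoDup l -> NoDup (firstn n l).
Proof. intro Hl. rewrite <- (firstn_skipn n l) in Hl. eapply NoDup_app_remove_r, Hl. Qed.

Lemma far_choice_spec (h c : R) (H : nat) (D : list squarelet) (p : pt * pt) :
  NoDup D ->
  NoDup (far_choice h c H D p) /\ incl (far_choice h c H D p) D /\
  (forall k, In k (far_choice h c H D p) -> far h c p k).
Proof.
  intro HD. unfold far_choice.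
  split; [|split].
  - apply NoDup_firstn, NoDup_filter, HD.
  - intros k Hk. apply incl_firstn, filter_In in Hk. tauto.
  - intros k Hk. apply incl_firstn, filter_In in Hk. apply farb_spec. tauto.
Qed.

(* At most 32 squarelets are near an endpoint of p, so a list D with at
   least H + 32 distinct squarelets leaves H far ones. *)
Lemma far_choice_length (h c : R) (H : nat) (D : list squarelet) (p : pt * pt) :
  0 < h -> c <= 3/2 * h -> NoDup D -> (H + 32 <= length D)%nat ->
  length (far_choice h c H D p) = H.
Proof.
  intros Hh Hc HD Hlen. unfold far_choice. rewrite length_firstn.
  assert (Hnear : (length D <= length (filter (farb h c p) D) +
                   length (near_squarelets h (fst p) ++ near_squarelets h (snd p)))%nat).
  { apply filter_length_lower; [exact HD|].
    intros k _ Hk. apply in_or_app.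
    assert (Hnf : ~ far h c p k) by (rewrite <- farb_spec; congruence).
    apply Classical_Prop.not_and_or in Hnf as [Hu|Hw];
      [left|right]; apply near_squarelets_spec with c; assumption. }
  rewrite length_app, !near_squarelets_length in Hnear. lia.
Qed.

Lemma same_quotient_length (N b : nat) (xs : list nat) :
  N <> 0%nat -> NoDup xs -> (forall x, In x xs -> x / N = b)%nat ->
  (length xs <= N)%nat.
Proof.
  intros HN Hxs Hq.
  apply Nat.le_trans with (length (seq (b * N) N)); [|rewrite length_seq; lia].
  apply NoDup_incl_length; [exact Hxs|].
  intros x Hx. apply in_seq.
  pose proof (Hq x Hx). pose proof (Nat.div_mod_eq x N).
  pose proof (Nat.mod_upper_bound x N HN). nia.
Qed.

Section BlockColouring.
  Context {A K : Type}.
  Variable decA : forall x y : A, {x = y} + {x <> y}.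
  Variable decK : forall x y : K, {x = y} + {x <> y}.
  Variables (lam : list A) (B N H : nat) (R : A -> list K).
  Hypothesis lam_length : (length lam <= B * N)%nat.
  Hypothesis R_length : forall p, length (R p) = H.

  Definition block_class (p : A) (k : K) : nat :=
    (index_of decA p lam / N * H + index_of decK k (R p))%nat.

  (* As there are at most B blocks, the classes are among the first B * H
     numbers. *)
  Lemma block_class_lt (p : A) (k : K) :
    In p lam -> In k (R p) -> (block_class p k < B * H)%nat.
  Proof.
    intros Hp Hk. unfold block_class.
    pose proof (index_of_lt decA p lam Hp) as Hip.
    pose proof (index_of_lt decK k (R p) Hk) as Hik. rewrite R_length in Hik.
    assert (Hblock : (index_of decA p lam / N < B)%nat).
    { apply Nat.Div0.div_lt_upper_bound. lia. }
    nia.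
  Qed.

  Lemma block_class_inj (p : A) (k k' : K) :
    In k (R p) -> In k' (R p) -> block_class p k = block_class p k' -> k = k'.
  Proof.
    unfold block_class. intros Hk Hk' E.
    apply (index_of_inj decK k k' (R p)); [exact Hk|exact Hk'|].
    apply Nat.add_cancel_l in E. exact E.
  Qed.

  (* All the items of a class come from a single block, so at most N of
     them use a given element k. *)
  Lemma block_class_fiber (c : nat) (k : K) (P : list A) :
    NoDup P -> incl P lam ->
    (forall p, In p P -> In k (R p) /\ block_class p k = c) ->
    (length P <= N)%nat.
  Proof.
    intros HP HPlam Hcls.
    destruct P as [|p0 P0]; [simpl; lia|].
    assert (HN : N <> 0%nat).
    { pose proof (index_of_lt decA p0 lam (HPlam p0 (in_eq p0 P0))). nia. }
    rewrite <- (length_map (fun p => index_of decA p lam)).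
    apply same_quotient_length with (c / H)%nat; [exact HN| |].
    - apply Injective_map_NoDup_in; [|exact HP].
      intros x y Hx Hy. apply index_of_inj; apply HPlam; assumption.
    - intros x Hx. apply in_map_iff in Hx as [p [<- Hp]].
      destruct (Hcls p Hp) as [Hk <-]. unfold block_class.
      pose proof (index_of_lt decK k (R p) Hk) as Hik. rewrite R_length in Hik.
      rewrite Nat.div_add_l, (Nat.div_small (index_of decK k (R p))); lia.
  Qed.
End BlockColouring.

Lemma block_count (gamma N0 N1 : nat) :
  (1 <= gamma)%nat -> INR N0 / (2 * INR gamma) = INR N1 -> N0 = (2 * gamma * N1)%nat.
Proof.
  intros Hg HN. apply INR_eq.
  assert (0 < INR gamma) by (apply lt_0_INR; lia).
  rewrite !mult_INR, <- HN. simpl. field. lra.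
Qed.

Theorem lemma6
  (rmin : R) (n gamma s l : nat) (M : nat)
  (V : list pt) (D : list squarelet) (lam : list (pt * pt))
  (* parameters *)
  (Hrmin : 0 < rmin < 1)
  (Hn : (1 <= n)%nat)
  (Hs : gamma = (s * s)%nat)
  (Hgamma : (1 <= gamma)%nat)
  (Hgl : (gamma ^ (l + 1) <= n)%nat)
  (* integrality of a_l, a_{l+1}, n_l, n_{l+1} *)
  (Ha0 : is_nat (INR n / INR gamma ^ l))
  (Ha1 : is_nat (INR n / INR gamma ^ l / INR gamma))
  (Hn0 : is_nat (INR n / (2 ^ l * INR gamma ^ l)))
  (Hn1 : is_nat (INR n / (2 ^ l * INR gamma ^ l) / (2 * INR gamma)))
  (* M = K2 2^{-l} gamma, with K1 = 4(1+rmin)^2/(pi rmin^2), K2 = 1/(2 K1) *)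
  (HM : INR M = / (2 * (4 * (1 + rmin) ^ 2 / (PI * rmin ^ 2))) * / 2 ^ l * INR gamma)
  (HMeven : Nat.Even M)
  (HM100 : (100 <= M)%nat)
  (* the point set V *)
  (HVnd : NoDup V)
  (HVcard : INR (length V) = INR n / (2 ^ l * INR gamma ^ l))
  (HVbox : forall v, In v V ->
     0 <= fst v <= sqrt (INR n / INR gamma ^ l) /\
     0 <= snd v <= sqrt (INR n / INR gamma ^ l))
  (HVsep : forall u v, In u V -> In v V -> u <> v -> rmin <= edist u v)
  (* the set D of M dense squarelets *)
  (HDnd : NoDup D)
  (HDcard : length D = M)
  (HDidx : forall k, In k D -> (fst k < s)%nat /\ (snd k < s)%nat)
  (HDdense : forall k, In k D ->
     dense s (sqrt (INR n / INR gamma ^ l / INR gamma)) V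
           (INR n / (2 ^ l * INR gamma ^ l) / (2 * INR gamma)) k)
  (* the permutation traffic lambda *)
  (Hsrc : Permutation (map fst lam) V)
  (Hdst : Permutation (map snd lam) V) :
  let h := sqrt (INR n / INR gamma ^ l / INR gamma) in
  let nl1 := INR n / (2 ^ l * INR gamma ^ l) / (2 * INR gamma) in
  exists (Rp : pt * pt -> list squarelet) (C : nat) (cls : pt * pt -> squarelet -> nat),
    (forall p, In p lam ->
        NoDup (Rp p) /\ incl (Rp p) D /\ length (Rp p) = Nat.div M 2 /\
        (forall k, In k (Rp p) ->
           r_ge h (fst p) k (sqrt (2 * (INR n / INR gamma ^ l / INR gamma))) /\
           r_ge h (snd p) k (sqrt (2 * (INR n / INR gamma ^ l / INR gamma))))) /\
    INR C <= / (2 * (4 * (1 + rmin) ^ 2 / (PI * rmin ^ 2))) * / 2 ^ l * INR gamma ^ 2 /\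
    (forall p k, In p lam -> In k (Rp p) -> (cls p k < C)%nat) /\
    (* in each class every pair occurs at most once *)
    (forall p k k', In p lam -> In k (Rp p) -> In k' (Rp p) ->
        cls p k = cls p k' -> k = k') /\
    (* in each class every squarelet occurs in at most n_{l+1} incidences *)
    (forall (c : nat) (k : squarelet) (P : list (pt * pt)),
        NoDup P -> incl P lam ->
        (forall p, In p P -> In k (Rp p) /\ cls p k = c) ->
        INR (length P) <= nl1).
Proof.
  intros h nl1.
  set (a := INR n / INR gamma ^ l / INR gamma) in *.
  assert (Ha : 0 < a).
  { unfold a. pose proof (lt_0_INR n ltac:(lia)).
    pose proof (lt_0_INR gamma ltac:(lia)) as Hg. pose proof (pow_lt _ l Hg).
    apply Rdiv_lt_0_compat; [apply Rdiv_lt_0_compat|]; lra. }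
  destruct Hn0 as [N0 HN0], Hn1 as [N1 HN1]. rewrite HN0 in HN1, HVcard.
  (* lambda has one pair per node, i.e. 2 gamma blocks of n_{l+1} pairs *)
  assert (Hlamlen : length lam = (2 * gamma * N1)%nat).
  { rewrite <- (block_count gamma N0 N1 Hgamma HN1), <- (length_map fst lam),
      (Permutation_length Hsrc). apply INR_eq, HVcard. }
  assert (HMhalf : M = (2 * (M / 2))%nat).
  { destruct HMeven as [H0 ->]. rewrite Nat.mul_comm, Nat.div_mul; lia. }
  set (Rp := far_choice h (sqrt (2 * a)) (M / 2) D).
  assert (HRlen : forall p, length (Rp p) = (M / 2)%nat).
  { intro p. apply far_choice_length;
      [apply sqrt_lt_R0, Ha|apply sqrt_double_le, Ha|exact HDnd|lia]. }
  exists Rp, (gamma * M)%nat, (block_class pair_dec squarelet_dec lam N1 (M / 2) Rp).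
  split; [|split; [|split; [|split]]].
  - intros p _. destruct (far_choice_spec h (sqrt (2 * a)) (M / 2) D p HDnd)
      as (HRnd & HRD & HRfar).
    repeat split; auto; apply HRfar; assumption.
  - rewrite mult_INR, HM. right. ring.
  - intros p k Hp Hk. replace (gamma * M)%nat with (2 * gamma * (M / 2))%nat by lia.
    apply (block_class_lt _ _ _ (2 * gamma)); [lia|exact HRlen|exact Hp|exact Hk].
  - intros p k k' _. apply block_class_inj.
  - intros cl k P HP HPlam Hcls. unfold nl1. rewrite HN0, HN1. apply le_INR.
    eapply (block_class_fiber _ _ _ (2 * gamma)); eauto. lia.
Qed.
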